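(* Let $n\ge1$, $0<\epsilon\le n+1$, $\beta=0.414213$, $\eta=\beta/\sqrt{n+1}$, $\gamma=1-\eta$, and $$\mathcal N=\left\lceil\frac{\log\!\big(\frac{n+1}{\epsilon}\big)}{-\log\!\big(1-\frac{0.414213}{\sqrt{n+1}}\big)}\right\rceil.$$ Run Algorithm A for $\mathcal N$ iterations. Then for every $k=0,1,\dots,\mathcal N$ the iterates are well defined, $\bar x^k>0$, $\bar s^k>0$, $\|\bar x^k\odot\bar s^k-\bar\mu^k e\|\le\beta\bar\mu^k$, and $$\bar r^k=(1-\eta)^k\bar r^0,\qquad (\bar x^k)^\top\bar s^k=(1-\eta)^k(n+1).$$ In particular, after exactly $\mathcal N$ iterations, $\|\bar r^{\mathcal N}\|\le\epsilon$ and $(\bar x^{\mathcal N})^\top\bar s^{\mathcal N}\le\epsilon$, i.e. $(\bar x^{\mathcal N},\bar s^{\mathcal N})$ is an $\epsilon$-approximate maximal complementary solution of the homogeneous LCP.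
   Context: Let $Q\in\mathbb{R}^{n_z\times n_z}$ be symmetric positive semidefinite, $c\in\mathbb{R}^{n_z}$, $A\in\mathbb{R}^{n_b\times n_z}$, $b\in\mathbb{R}^{n_b}$, and $n=n_z+n_b$. Define $M=\begin{bmatrix}Q&-A^\top\\ A&0\end{bmatrix}$ and $q=\begin{bmatrix}c\\-b\end{bmatrix}$. For a matrix $M'$ and vector $q'$ and $\bar x=(x,\tau)\in\mathbb{R}^{n+1}_{++}$, write $\psi(\bar x)=\begin{bmatrix} M'x+q'\tau\\ -x^\top M'x/\tau-x^\top q'\end{bmatrix}$ with Jacobian $\nabla\psi(\bar x)=\begin{bmatrix} M' & q'\\ -x^\top(M'+M'^\top)/\tau-q'^\top & x^\top M'x/\tau^2\end{bmatrix}$. $\odot$ is componentwise product, $e$ the all-ones vector, $\|\cdot\|$ the Euclidean norm. Algorithm A: (1) Let $\sigma=\max\{1,\max_i(Me+q)_i,-e^\top Me-e^\top q\}$ and set $M'=M/\sigma$, $q'=q/\sigma$ (used in $\psi$ henceforth). (2) Set $\bar x^0=e\in\mathbb{R}^{n+1}$, $\bar s^0=e\in\mathbb{R}^{n+1}$. (3) For $k=0,1,\dots$: set $\bar r^k=\bar s^k-\psi(\bar x^k)$, $\bar\mu^k=(\bar x^k)^\top\bar s^k/(n+1)$; compute $(d_{\bar x},d_{\bar s})$ solving $d_{\bar s}-\nabla\psi(\bar x^k)d_{\bar x}=-\eta\bar r^k$ and $\bar x^k\odot d_{\bar s}+\bar s^k\odot d_{\bar x}=\gamma\bar\mu^k e-\bar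 x^k\odot\bar s^k$; set $\bar x^{k+1}=\bar x^k+d_{\bar x}$ and $\bar s^{k+1}=\psi(\bar x^{k+1})+\gamma\bar r^k$. An $\epsilon$-approximate maximal complementary solution means $\bar x,\bar s>0$ with $\|\bar s-\psi(\bar x)\|\le\epsilon$ and $\bar x^\top\bar s\le\epsilon$. *)

From HB Require Import structures.
From mathcomp Require Import all_boot all_order all_algebra.
From mathcomp Require Import reals exp.
Set Implicit Arguments. Unset Strict Implicit. Unset Printing Implicit Defensive.
Import Order.TTheory GRing.Theory Num.Theory.
Local Open Scope ring_scope.

Section AlgA.
Variables (R : realType) (nz nb : nat).
Local Notation nn := (nz + nb)%N.
Local Notation vec := 'cV[R]_(nn + 1).

Definition onesv (m : nat) : 'cV[R]_m := const_mx 1.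
Definition hadam (m : nat) (u v : 'cV[R]_m) : 'cV[R]_m := \col_i (u i 0 * v i 0).
Definition dotv (m : nat) (u v : 'cV[R]_m) : R := \sum_i u i 0 * v i 0.
Definition enorm (m : nat) (u : 'cV[R]_m) : R := Num.sqrt (\sum_i u i 0 ^+ 2).
Definition posv (m : nat) (u : 'cV[R]_m) : Prop := forall i, 0 < u i 0.
Definition diagc (m : nat) (u : 'cV[R]_m) : 'M[R]_m := diag_mx u^T.

Variables (Q : 'M[R]_nz) (c : 'cV[R]_nz) (A : 'M[R]_(nb, nz)) (b : 'cV[R]_nb).
Variables (eta gamma : R).

Definition Mmat : 'M[R]_nn := block_mx Q (- A^T) A 0.
Definition qvec : 'cV[R]_nn := col_mx c (- b).

Definition sigma : R :=
  Num.max (Num.max 1 (\big[Num.max/0]_i ((Mmat *m onesv nn + qvec) i 0)))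
          (- dotv (onesv nn) (Mmat *m onesv nn) - dotv (onesv nn) qvec).
Definition Mp : 'M[R]_nn := sigma^-1 *: Mmat.
Definition qp : 'cV[R]_nn := sigma^-1 *: qvec.

Definition xpart (xb : vec) : 'cV[R]_nn := usubmx xb.
Definition tau (xb : vec) : R := dsubmx xb 0 0.

Definition psi (xb : vec) : vec :=
  let x := xpart xb in let t := tau xb in
  col_mx (Mp *m x + t *: qp)
         (const_mx (- ((x^T *m Mp *m x) 0 0) / t - (x^T *m qp) 0 0)).

Definition jac_psi (xb : vec) : 'M[R]_(nn + 1) :=
  let x := xpart xb in let t := tau xb in
  block_mx Mp qp
    (- (t^-1 *: (x^T *m (Mp + Mp^T))) - qp^T)
    (const_mx (((x^T *m Mp *m x) 0 0) / t ^+ 2)).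

Definition resid (xb sb : vec) : vec := sb - psi xb.
Definition mu (xb sb : vec) : R := dotv xb sb / (nn + 1)%:R.

Definition newton_mat (xb sb : vec) : 'M[R]_((nn + 1) + (nn + 1)) :=
  block_mx (- jac_psi xb) 1%:M (diagc sb) (diagc xb).
Definition newton_rhs (xb sb : vec) : 'cV[R]_((nn + 1) + (nn + 1)) :=
  col_mx (- (eta *: resid xb sb))
         (gamma * mu xb sb *: onesv (nn + 1) - hadam xb sb).
Definition newton_sol (xb sb : vec) := invmx (newton_mat xb sb) *m newton_rhs xb sb.
Definition dxb (xb sb : vec) : vec := usubmx (newton_sol xb sb).

Definition stepA (p : vec * vec) : vec * vec :=
  let xb := p.1 in let sb := p.2 in
  let xn := xb + dxb xb sb in
  (xn, psi xn + gamma *: resid xb sb).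

Definition iterA (k : nat) : vec * vec := iter k stepA (onesv (nn + 1), onesv (nn + 1)).
Definition xk (k : nat) : vec := (iterA k).1.
Definition sk (k : nat) : vec := (iterA k).2.
Definition rk (k : nat) : vec := resid (xk k) (sk k).
Definition muk (k : nat) : R := mu (xk k) (sk k).

End AlgA.

Definition betaA {R : realType} : R := 414213%:R / 1000000%:R.

Definition Niter {R : realType} (n : nat) (eps : R) : nat :=
  `| Num.ceil (ln ((n + 1)%:R / eps) / (- ln (1 - betaA / Num.sqrt (n + 1)%:R))) |%N.

From HB Require Import structures.
From mathcomp Require Import all_boot all_order all_algebra.
From mathcomp Require Import reals exp.
From mathcomp Require Import ring lra.
Import Order.TTheory GRing.Theory Num.Theory.
Set Implicit Arguments. Unset Strict Implicit. Unset Printing Implicit Defensive.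
Local Open Scope ring_scope.

(* Algorithm A takes exact Newton steps for the map [psi], which satisfies the
   Euler relation [x . psi x = 0] and is monotone ([d . J d >= 0], as [M] is
   positive semidefinite).  Hence the direction [dx] is orthogonal to the
   residual, so the residual and the duality gap both contract by exactly
   [gamma = 1 - eta]; and since the nonlinearity of [psi] only affects the
   [tau] coordinate, the new complementarity products are
   [gamma mu + dx ds - w e_tau] with [w = dx . J dx >= 0].  The classical
   short-step analysis of the neighbourhood [|x s - mu e| <= beta mu] with
   [eta = beta / sqrt (n + 1)] keeps the iterates positive and centred.  The
   scaling [sigma] makes the initial residual nonnegative with [e . r0 = n + 1],
   so [|r0| <= n + 1], and [N] contractions bring residual and gap below [eps]. *)

Section PositivePart.
Context {R : realFieldType}.
Implicit Types x y : R.

Definition pospart x := Num.max x 0.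

Lemma pospart_ge0 x : 0 <= pospart x.
Proof. by rewrite le_max lexx orbT. Qed.

Lemma pospart_ge x : x <= pospart x.
Proof. by rewrite le_max lexx. Qed.

Lemma pospart_le x y : x <= y -> pospart x <= pospart y.
Proof. by move=> lexy; rewrite ge_max pospart_ge0 (le_trans lexy (pospart_ge y)). Qed.

Lemma pospart_le_ge0 x y : x <= y -> 0 <= y -> pospart x <= y.
Proof. by move=> lexy y0; rewrite ge_max lexy. Qed.

Lemma pospartN_sub x : pospart x - pospart (- x) = x.
Proof.
rewrite /pospart; case: (ger0P x) => [x0|x0].
  by rewrite (max_idPr _) ?subr0 // oppr_le0.
by rewrite (max_idPl _) ?add0r ?opprK // oppr_ge0 ltW.
Qed.

Lemma sqr_pospart x : x ^+ 2 = pospart x ^+ 2 + pospart (- x) ^+ 2.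
Proof.
rewrite /pospart; case: (ger0P x) => [x0|x0].
  by rewrite (max_idPr _) ?expr0n ?addr0 // oppr_le0.
by rewrite (max_idPl _) ?expr0n ?add0r ?sqrrN // oppr_ge0 ltW.
Qed.

End PositivePart.

Section FiniteSums.
Context {R : realFieldType} {I : finType}.
Implicit Types f : I -> R.

Lemma ler_sum_term f j : (forall i, 0 <= f i) -> f j <= \sum_i f i.
Proof. by move=> f0; rewrite (bigD1 j) //= lerDl sumr_ge0. Qed.

Lemma sum_sqr_le_sqr_sum f : (forall i, 0 <= f i) -> \sum_i f i ^+ 2 <= (\sum_i f i) ^+ 2.
Proof.
move=> f0; rewrite [X in _ <= X]expr2 mulr_suml; apply: ler_sum => i _.
by rewrite expr2 ler_wpM2l // ler_sum_term.
Qed.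

Lemma sumr_const_card (a : R) : \sum_(i : I) a = #|I|%:R * a.
Proof. by rewrite sumr_const mulr_natl; congr (_ *+ _); apply: eq_card. Qed.

Lemma sum_delta (l : I) (w : R) : \sum_i (i == l)%:R * w = w.
Proof. by rewrite (bigD1 l) //= eqxx mul1r big1 ?addr0 // => i /negbTE ->; rewrite mul0r. Qed.

Lemma ge_sum_pospart f j : 0 <= \sum_i f i -> - \sum_i pospart (f i) <= f j.
Proof.
move=> sum0; rewrite (bigD1 j) //=; rewrite (bigD1 j) //= in sum0.
have : \sum_(i | i != j) f i <= \sum_(i | i != j) pospart (f i).
  by apply: ler_sum => i _; apply: pospart_ge.
have := pospart_ge0 (f j); lra.
Qed.

(* The positive and negative parts of a zero-sum family have equal sums, and
   each contributes at most its sum squared. *)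
Lemma sum_sqr_le_sum_pospart f : \sum_i f i = 0 ->
  \sum_i f i ^+ 2 <= 2 * (\sum_i pospart (f i)) ^+ 2.
Proof.
move=> sum0.
have sumN : \sum_i pospart (- f i) = \sum_i pospart (f i).
  apply/eqP; rewrite -subr_eq0 -sumrB -oppr_eq0 -sumrN -[X in _ == X]sum0.
  by apply/eqP/eq_bigr => i _; rewrite opprB pospartN_sub.
rewrite (eq_bigr _ (fun i _ => sqr_pospart (f i))) big_split /=.
have := sum_sqr_le_sqr_sum (fun i => pospart_ge0 (f i)).
have := sum_sqr_le_sqr_sum (fun i => pospart_ge0 (- f i)).
rewrite sumN; lra.
Qed.

End FiniteSums.

Section ScalarBounds.
Context {R : realFieldType}.

Lemma ge_of_sqr_dev_le (p mu b : R) : 0 <= b -> 0 < mu ->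
  (p - mu) ^+ 2 <= b ^+ 2 * mu ^+ 2 -> (1 - b) * mu <= p.
Proof.
move=> b0 mu0 dev; rewrite leNgt; apply/negP => lt_p.
have : 0 < (mu - p - b * mu) * (mu - p + b * mu).
  by apply: mulr_gt0; have := mulr_ge0 b0 (ltW mu0); lra.
nra.
Qed.

Lemma mul_le_sqr_div {x s dx ds h : R} : 0 < x * s ->
  s * dx + x * ds = h -> dx * ds <= h ^+ 2 / (4 * (x * s)).
Proof.
move=> xs0 <-; rewrite ler_pdivlMr; last by rewrite mulr_gt0.
have := sqr_ge0 (s * dx - x * ds); nra.
Qed.

(* If [x + dx <= 0], the segment from [x] to [x + dx] leaves the positive axis
   at some [alpha] in (0, 1], where the product
   [(1 - alpha) x s + alpha h + alpha^2 dx ds >= m - L > 0] cannot vanish. *)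
Lemma newton_ray_gt0 {x s dx ds h m L : R} : 0 < x -> 0 < s ->
  s * dx + x * ds = h - x * s -> m <= x * s -> m <= h ->
  - L <= dx * ds -> 0 <= L -> L < m -> 0 < x + dx.
Proof.
move=> x0 s0 eqh mxs mh Ldxds L0 Lm; rewrite ltNge; apply/negP => le_x.
have dx_lt0 : dx < 0 by lra.
set al := x / - dx.
have al0 : 0 < al by rewrite divr_gt0 // oppr_gt0.
have al1 : al <= 1 by rewrite ler_pdivrMr ?oppr_gt0 // mul1r; lra.
have hit : x + al * dx = 0 by rewrite /al; field; rewrite ltr0_neq0.
have : (x + al * dx) * (s + al * ds)
       = x * s + al * (s * dx + x * ds) + al ^+ 2 * (dx * ds) by ring.
rewrite hit mul0r eqh.
have : al ^+ 2 * - L <= al ^+ 2 * (dx * ds) by rewrite ler_wpM2l ?sqr_ge0.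
have : al ^+ 2 <= 1 by rewrite expr2; nra.
nra.
Qed.

End ScalarBounds.

Section NewtonStepNeighbourhood.
Variables (R : realFieldType) (I : finType).
Variables (x s dx ds : I -> R) (mu beta eta w : R).
Hypotheses (x_gt0 : forall i, 0 < x i) (s_gt0 : forall i, 0 < s i) (mu_gt0 : 0 < mu).
Hypothesis sum_xs : \sum_i x i * s i = #|I|%:R * mu.
Hypothesis xs_near : \sum_i (x i * s i - mu) ^+ 2 <= beta ^+ 2 * mu ^+ 2.
Hypotheses (beta_ge0 : 0 <= beta) (beta_small : beta <= 21/50) (eta_le_beta : eta <= beta).
Hypothesis card_eta : #|I|%:R * eta ^+ 2 = beta ^+ 2.
Hypothesis newton_eq : forall i, s i * dx i + x i * ds i = (1 - eta) * mu - x i * s i.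
Hypothesis sum_dxds : \sum_i dx i * ds i = w.
Hypothesis w_ge0 : 0 <= w.

Let beta_lt1 : 0 < 1 - beta.
Proof. by have := beta_small; lra. Qed.

Let one_sub_eta_ge : 58/100 <= 1 - eta.
Proof. by have := beta_small; have := eta_le_beta; lra. Qed.

Let P_ge0 : 0 <= 37/100 * beta * mu.
Proof. by apply: mulr_ge0; [apply: mulr_ge0 => //; lra | exact: ltW]. Qed.

Let xs_ge i : (1 - beta) * mu <= x i * s i.
Proof.
apply: ge_of_sqr_dev_le => //; apply: le_trans xs_near.
exact: ler_sum_term i (fun j => sqr_ge0 (x j * s j - mu)).
Qed.

(* The cross term vanishes because the [x i * s i] average to [mu]. *)
Let sum_sqr_target :
  \sum_i ((1 - eta) * mu - x i * s i) ^+ 2 <= 2 * (beta ^+ 2 * mu ^+ 2).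
Proof.
have -> : \sum_i ((1 - eta) * mu - x i * s i) ^+ 2 = \sum_i (x i * s i - mu) ^+ 2
    + \sum_i 2 * eta * mu * (x i * s i - mu) + \sum_(i : I) eta ^+ 2 * mu ^+ 2.
  by rewrite -!big_split /=; apply: eq_bigr => i _; ring.
have -> : \sum_i 2 * eta * mu * (x i * s i - mu) = 0.
  by rewrite -mulr_sumr sumrB sum_xs sumr_const_card subrr mulr0.
by rewrite sumr_const_card mulrA card_eta addr0 mulr_natl mulr2n lerD2r.
Qed.

Lemma sum_pospart_newton_prod : \sum_i pospart (dx i * ds i) <= 37/100 * beta * mu.
Proof.
have den_gt0 : 0 < 4 * ((1 - beta) * mu).
  by apply: mulr_gt0 => //; exact: mulr_gt0 beta_lt1 mu_gt0.
apply: (@le_trans _ _ (\sum_i ((1 - eta) * mu - x i * s i) ^+ 2 / (4 * ((1 - beta) * mu)))).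
  apply: ler_sum => i _; apply: pospart_le_ge0; last by rewrite divr_ge0 ?sqr_ge0 ?ltW.
  have xs_gt0 : 0 < x i * s i by rewrite mulr_gt0.
  apply: le_trans (mul_le_sqr_div xs_gt0 (newton_eq i)) _.
  rewrite ler_wpM2l ?sqr_ge0 // lef_pV2 ?posrE ?mulr_gt0 // ler_pM2l //.
rewrite -mulr_suml ler_pdivrMr //; apply: le_trans sum_sqr_target _.
have : 0 <= beta * mu ^+ 2 * (21/50 - beta).
  by apply: mulr_ge0; [rewrite mulr_ge0 ?sqr_ge0 | rewrite subr_ge0].
rewrite expr2; nra.
Qed.

Lemma newton_step_gt0 i : 0 < x i + dx i.
Proof.
apply: (newton_ray_gt0 (L := 37/100 * beta * mu) (x_gt0 i) (s_gt0 i) (newton_eq i) (xs_ge i)).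
- by rewrite ler_pM2r //; have := eta_le_beta; lra.
- have := ge_sum_pospart (f := fun j => dx j * ds j) i; rewrite sum_dxds => /(_ w_ge0).
  by apply: le_trans; rewrite lerN2 sum_pospart_newton_prod.
- exact: P_ge0.
- by rewrite ltr_pM2r //; have := beta_small; lra.
Qed.

(* [dx * ds - w e_l] has zero sum and positive part below that of [dx * ds];
   the constant [2 (37/100)^2 <= (58/100)^2 <= (1 - eta)^2] closes the bound. *)
Lemma newton_step_near (l : I) :
  \sum_i (dx i * ds i - (i == l)%:R * w) ^+ 2 <= beta ^+ 2 * ((1 - eta) * mu) ^+ 2.
Proof.
pose d i := dx i * ds i - (i == l)%:R * w.
have sum_d : \sum_i d i = 0 by rewrite /d sumrB sum_delta sum_dxds subrr.
have pos_d : \sum_i pospart (d i) <= 37/100 * beta * mu.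
  apply: le_trans sum_pospart_newton_prod; apply: ler_sum => i _; apply: pospart_le.
  by rewrite /d lerBlDr lerDl mulr_ge0 ?ler0n.
apply: le_trans (sum_sqr_le_sum_pospart sum_d) _.
have pos_d2 : (\sum_i pospart (d i)) ^+ 2 <= (37/100 * beta * mu) ^+ 2.
  by rewrite ler_sqr ?nnegrE ?P_ge0 ?sumr_ge0 // => i _; apply: pospart_ge0.
have : (58/100 * mu) ^+ 2 <= ((1 - eta) * mu) ^+ 2.
  have mu58_ge0 : 0 <= 58/100 * mu by apply: mulr_ge0; [lra | exact: ltW].
  by rewrite ler_sqr ?nnegrE ?ler_pM2r // (le_trans mu58_ge0) // ler_pM2r // one_sub_eta_ge.
have : 0 <= beta ^+ 2 * mu ^+ 2 by rewrite mulr_ge0 ?sqr_ge0.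
rewrite !exprMn in pos_d2 *; nra.
Qed.

End NewtonStepNeighbourhood.

Section InnerProduct.
Context {R : realType}.
Implicit Types (m : nat).

Lemma dotvE m (u v : 'cV[R]_m) : dotv u v = (u^T *m v) 0 0.
Proof. by rewrite /dotv !mxE; apply: eq_bigr => i _; rewrite mxE. Qed.

Lemma dotvC m (u v : 'cV[R]_m) : dotv u v = dotv v u.
Proof. by rewrite /dotv; apply: eq_bigr => i _; rewrite mulrC. Qed.

Lemma dotvDl m (u v w : 'cV[R]_m) : dotv (u + v) w = dotv u w + dotv v w.
Proof. by rewrite /dotv -big_split; apply: eq_bigr => i _; rewrite mxE mulrDl. Qed.

Lemma dotvDr m (u v w : 'cV[R]_m) : dotv w (u + v) = dotv w u + dotv w v.
Proof. by rewrite dotvC dotvDl !(dotvC w). Qed.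

Lemma dotvZl m a (u w : 'cV[R]_m) : dotv (a *: u) w = a * dotv u w.
Proof. by rewrite /dotv mulr_sumr; apply: eq_bigr => i _; rewrite mxE mulrA. Qed.

Lemma dotvZr m a (u w : 'cV[R]_m) : dotv w (a *: u) = a * dotv w u.
Proof. by rewrite dotvC dotvZl dotvC. Qed.

Lemma dotvNl m (u w : 'cV[R]_m) : dotv (- u) w = - dotv u w.
Proof. by rewrite -scaleN1r dotvZl mulN1r. Qed.

Lemma dotvNr m (u w : 'cV[R]_m) : dotv w (- u) = - dotv w u.
Proof. by rewrite dotvC dotvNl dotvC. Qed.

Lemma dotvBl m (u v w : 'cV[R]_m) : dotv (u - v) w = dotv u w - dotv v w.
Proof. by rewrite dotvDl dotvNl. Qed.

Lemma dotvBr m (u v w : 'cV[R]_m) : dotv w (u - v) = dotv w u - dotv w v.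
Proof. by rewrite dotvDr dotvNr. Qed.

Lemma dotv_mulmx m n (M : 'M[R]_(m, n)) (u : 'cV[R]_m) (v : 'cV[R]_n) :
  dotv u (M *m v) = dotv (M^T *m u) v.
Proof. by rewrite !dotvE trmx_mul trmxK mulmxA. Qed.

Lemma dotv_col_mx m1 m2 (a1 b1 : 'cV[R]_m1) (a2 b2 : 'cV[R]_m2) :
  dotv (col_mx a1 a2) (col_mx b1 b2) = dotv a1 b1 + dotv a2 b2.
Proof.
rewrite /dotv big_split_ord /=; congr (_ + _); apply: eq_bigr => i _.
  by rewrite !col_mxEu.
by rewrite !col_mxEd.
Qed.

Lemma hadamE m (u v : 'cV[R]_m) i : hadam u v i 0 = u i 0 * v i 0.
Proof. by rewrite mxE. Qed.

Lemma dotv_hadam m (u v : 'cV[R]_m) : dotv u v = \sum_i hadam u v i 0.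
Proof. by apply: eq_bigr => i _; rewrite hadamE. Qed.

Lemma trmx_mul_dotv m (u v : 'cV[R]_m) : u^T *m v = (dotv u v)%:M.
Proof. by rewrite dotvE -mx11_scalar. Qed.

Lemma scalar_mx11E (a : R) : (a%:M : 'M[R]_1) 0 0 = a.
Proof. by rewrite mxE eqxx mulr1n. Qed.

Lemma const_mx11 (a : R) : const_mx a = a%:M :> 'cV[R]_1.
Proof. by apply/matrixP => i j; rewrite !ord1 !mxE. Qed.

Lemma enormZ m a (v : 'cV[R]_m) : 0 <= a -> enorm (a *: v) = a * enorm v.
Proof.
move=> a0; rewrite /enorm; under eq_bigr => i _ do rewrite mxE exprMn.
by rewrite -mulr_sumr sqrtrM ?sqr_ge0 // sqrtr_sqr ger0_norm.
Qed.

Lemma enorm_le m (v : 'cV[R]_m) a : 0 <= a -> (enorm v <= a) = (\sum_i v i 0 ^+ 2 <= a ^+ 2).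
Proof. by move=> a0; rewrite /enorm -{1}(ger0_norm a0) -sqrtr_sqr ler_sqrt // sqr_ge0. Qed.

Lemma dotv_onesv m : dotv (onesv R m) (onesv R m) = m%:R.
Proof. by rewrite /dotv; under eq_bigr => i _ do rewrite mxE mulr1; rewrite sumr_const card_ord. Qed.

End InnerProduct.

Section PsiAlgebra.
Context {R : realType} {nz nb : nat}.
Variables (Q : 'M[R]_nz) (c : 'cV[R]_nz) (A : 'M[R]_(nb, nz)) (b : 'cV[R]_nb).
Local Notation nn := (nz + nb)%N.
Local Notation vec := 'cV[R]_(nn + 1).
Local Notation K := (Mp Q c A b).
Local Notation qq := (qp Q c A b).
Local Notation psi := (psi Q c A b).
Local Notation jac := (jac_psi Q c A b).
Local Notation qf v := (dotv v (K *m v)).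
Local Notation e_tau := (col_mx 0 1%:M : vec).

Lemma sigma_ge1 : 1 <= sigma Q c A b.
Proof. by rewrite /sigma !le_max lexx. Qed.

Lemma sigma_gt0 : 0 < sigma Q c A b.
Proof. exact: lt_le_trans ltr01 sigma_ge1. Qed.

Lemma xbar_split (xb : vec) : xb = col_mx (xpart xb) (tau xb)%:M.
Proof. by rewrite /xpart /tau -mx11_scalar vsubmxK. Qed.

Lemma xbar_eq (u v : vec) : xpart u = xpart v -> tau u = tau v -> u = v.
Proof. by move=> eqx eqt; rewrite (xbar_split u) (xbar_split v) eqx eqt. Qed.

Lemma dotv_xbar (u v : vec) : dotv u v = dotv (xpart u) (xpart v) + tau u * tau v.
Proof. by rewrite {1}(xbar_split u) {1}(xbar_split v) dotv_col_mx {2}/dotv big_ord1 !scalar_mx11E. Qed.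

Lemma xpartD (u v : vec) : xpart (u + v) = xpart u + xpart v.
Proof. by apply/matrixP => i j; rewrite !mxE. Qed.

Lemma tauD (u v : vec) : tau (u + v) = tau u + tau v.
Proof. by rewrite /tau !mxE. Qed.

Lemma xpartZ a (u : vec) : xpart (a *: u) = a *: xpart u.
Proof. by apply/matrixP => i j; rewrite !mxE. Qed.

Lemma tauZ a (u : vec) : tau (a *: u) = a * tau u.
Proof. by rewrite /tau !mxE. Qed.

Lemma xpartN (u : vec) : xpart (- u) = - xpart u.
Proof. by apply/matrixP => i j; rewrite !mxE. Qed.

Lemma tauN (u : vec) : tau (- u) = - tau u.
Proof. by rewrite /tau !mxE. Qed.

Lemma xpart_e_tau : xpart e_tau = 0.
Proof. by rewrite /xpart col_mxKu. Qed.

Lemma tau_e_tau : tau e_tau = 1.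
Proof. by rewrite /tau col_mxKd scalar_mx11E. Qed.

Lemma xpart_psi xb : xpart (psi xb) = K *m xpart xb + tau xb *: qq.
Proof. by rewrite /psi /= /xpart col_mxKu. Qed.

Lemma tau_psi xb : tau (psi xb) = - qf (xpart xb) / tau xb - dotv (xpart xb) qq.
Proof. by rewrite {1}/psi /= {1}/tau col_mxKd mxE !dotvE mulmxA. Qed.

Lemma xpart_jac_psi xb d : xpart (jac xb *m d) = K *m xpart d + tau d *: qq.
Proof.
by rewrite {1}(xbar_split d) /jac_psi /= mul_block_col /xpart col_mxKu mul_mx_scalar.
Qed.

Lemma tau_jac_psi xb d : tau (jac xb *m d) =
  - (dotv (xpart xb) (K *m xpart d) + dotv (xpart d) (K *m xpart xb)) / tau xb
  - dotv qq (xpart d) + qf (xpart xb) / tau xb ^+ 2 * tau d.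
Proof.
rewrite {1}(xbar_split d) /jac_psi /= mul_block_col {1}/tau col_mxKd mul_mx_scalar.
have sym : (xpart xb)^T *m (K + K^T) *m xpart d =
    (dotv (xpart xb) (K *m xpart d) + dotv (xpart d) (K *m xpart xb))%:M.
  rewrite mulmxDr mulmxDl -!mulmxA !trmx_mul_dotv (dotv_mulmx K^T) trmxK.
  by rewrite (dotvC (K *m _)) raddfD.
rewrite -[_ *m K *m xpart xb]mulmxA trmx_mul_dotv scalar_mx11E.
rewrite mulmxBl mulNmx -scalemxAl sym trmx_mul_dotv const_mx11 !mxE !eqxx !mulr1n.
ring.
Qed.

Section NonzeroTau.
Variable xb : vec.
Hypothesis tau_neq0 : tau xb != 0.

(* Euler relations of the positively 1-homogeneous map [psi]. *)
Lemma dotv_psi : dotv xb (psi xb) = 0.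
Proof. by rewrite dotv_xbar xpart_psi tau_psi dotvDr dotvZr; field. Qed.

Lemma dotv_jac_psi d : dotv xb (jac xb *m d) = - dotv (psi xb) d.
Proof.
rewrite !dotv_xbar xpart_jac_psi tau_jac_psi xpart_psi tau_psi.
by rewrite dotvDr dotvZr dotvDl dotvZl (dotvC (K *m _) (xpart d)); field.
Qed.

Lemma dotv_jac_psi_quad d :
  dotv d (jac xb *m d) = qf (xpart d - (tau d / tau xb) *: xpart xb).
Proof.
rewrite dotv_xbar xpart_jac_psi tau_jac_psi dotvDr dotvZr.
rewrite mulmxBr -scalemxAr dotvBl !dotvBr !dotvZl !dotvZr (dotvC (qvec c b)).
by field; rewrite tau_neq0 gt_eqF ?sigma_gt0.
Qed.

Lemma psi_shift d : tau xb + tau d != 0 ->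
  psi (xb + d) = psi xb + jac xb *m d
    - (qf (xpart d - (tau d / tau xb) *: xpart xb) / (tau xb + tau d)) *: e_tau.
Proof.
move=> taud_neq0; apply: xbar_eq.
  rewrite !xpartD xpartN xpartZ xpart_e_tau scaler0 subr0.
  by rewrite !xpart_psi xpart_jac_psi xpartD tauD mulmxDr scalerDl addrACA.
rewrite !tauD tauN tauZ tau_e_tau mulr1 !tau_psi tau_jac_psi xpartD tauD.
rewrite mulmxBr -scalemxAr dotvBl !dotvBr !dotvZl !dotvZr mulmxDr !dotvDl !dotvDr.
by rewrite (dotvC (qvec c b)); field; rewrite taud_neq0 tau_neq0 gt_eqF ?sigma_gt0.
Qed.

End NonzeroTau.

End PsiAlgebra.

Section NewtonSystem.
Context {R : realType} {nz nb : nat}.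
Variables (Q : 'M[R]_nz) (c : 'cV[R]_nz) (A : 'M[R]_(nb, nz)) (b : 'cV[R]_nb).
Hypothesis Q_psd : forall z : 'cV[R]_nz, 0 <= (z^T *m Q *m z) 0 0.
Local Notation nn := (nz + nb)%N.
Local Notation vec := 'cV[R]_(nn + 1).
Local Notation K := (Mp Q c A b).
Local Notation jac := (jac_psi Q c A b).

(* The skew-symmetric blocks [-A^T] and [A] cancel in the quadratic form. *)
Lemma Mmat_psd v : 0 <= dotv v (Mmat Q A *m v).
Proof.
rewrite -[v]vsubmxK /Mmat mul_block_col dotv_col_mx mul0mx addr0 mulNmx.
rewrite dotvDr dotvNr (dotv_mulmx A^T) trmxK (dotvC (A *m _)) subrK.
by rewrite dotvE mulmxA.
Qed.

Lemma Mp_psd v : 0 <= dotv v (K *m v).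
Proof.
rewrite /Mp -scalemxAl dotvZr mulr_ge0 ?Mmat_psd //.
by rewrite invr_ge0 ltW ?sigma_gt0.
Qed.

Lemma mul_newton_mat xb sb (a d : vec) : newton_mat Q c A b xb sb *m col_mx a d =
  col_mx (- (jac xb *m a) + d) (diagc sb *m a + diagc xb *m d).
Proof. by rewrite /newton_mat mul_block_col mulNmx mul1mx. Qed.

Lemma diagc_mulE (u v : vec) i : (diagc u *m v) i 0 = u i 0 * v i 0.
Proof. by rewrite /diagc mul_diag_mx !mxE. Qed.

Lemma tau_gt0 (xb : vec) : posv xb -> 0 < tau xb.
Proof. by move=> xb_gt0; rewrite /tau mxE. Qed.

(* A kernel vector [(a, J a)] satisfies [s a + x (J a) = 0] componentwise, so
   [a . J a = - sum s/x a^2 <= 0], while [a . J a >= 0] by [dotv_jac_psi_quad]. *)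
Lemma newton_mat_ker (xb sb : vec) (v : 'cV[R]_((nn + 1) + (nn + 1))) :
  posv xb -> posv sb -> newton_mat Q c A b xb sb *m v = 0 -> v = 0.
Proof.
move=> xb_gt0 sb_gt0; rewrite -[v]vsubmxK mul_newton_mat => /eqP.
rewrite col_mx_eq0 => /andP[/eqP eq1 /eqP eq2].
set a := usubmx v; set d := dsubmx v.
have ed : d = jac xb *m a by apply/eqP; rewrite -subr_eq0 addrC eq1.
have comp i : d i 0 = - (sb i 0 * a i 0) / xb i 0.
  have := congr1 (fun M : vec => M i 0) eq2; rewrite mxE !diagc_mulE [RHS]mxE => e.
  apply: (mulIf (lt0r_neq0 (xb_gt0 i))); rewrite divfK ?lt0r_neq0 //; lra.
have w_i i : 0 <= sb i 0 / xb i 0 * a i 0 ^+ 2.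
  by rewrite mulr_ge0 ?sqr_ge0 ?divr_ge0 ?ltW.
have ad : dotv a d = - \sum_i sb i 0 / xb i 0 * a i 0 ^+ 2.
  rewrite /dotv -sumrN; apply: eq_bigr => i _; rewrite comp.
  by field; rewrite lt0r_neq0.
have sum0 : \sum_i sb i 0 / xb i 0 * a i 0 ^+ 2 = 0.
  apply/eqP; rewrite eq_le sumr_ge0 ?andbT // -oppr_ge0 -ad ed.
  by rewrite dotv_jac_psi_quad ?Mp_psd // gt_eqF ?tau_gt0.
have a0 : a = 0.
  apply/matrixP => i j; rewrite ord1 [RHS]mxE.
  have /eqP := psumr_eq0P (fun i _ => w_i i) sum0 (i := i) isT.
  by rewrite !mulf_eq0 invr_eq0 orbb (gt_eqF (sb_gt0 i)) (gt_eqF (xb_gt0 i)) => /eqP.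
by rewrite ed a0 mulmx0 col_mx0.
Qed.

Lemma newton_mat_unit xb sb : posv xb -> posv sb -> newton_mat Q c A b xb sb \in unitmx.
Proof.
move=> xb_gt0 sb_gt0; rewrite -unitmx_tr -row_free_unit -kermx_eq0.
apply/eqP/row_matrixP => i; rewrite row0; apply: trmx_inj; rewrite trmx0.
apply: (newton_mat_ker xb_gt0 sb_gt0).
have : row i (kermx (newton_mat Q c A b xb sb)^T) *m (newton_mat Q c A b xb sb)^T = 0.
  by rewrite -row_mul mulmx_ker row0.
by move/(congr1 trmx); rewrite trmx_mul trmxK trmx0.
Qed.

End NewtonSystem.

Lemma betaA_bounds {R : realType} : 0 < (betaA : R) /\ (betaA : R) <= 21/50.
Proof. by rewrite /betaA; split; lra. Qed.

Lemma eta_bounds {R : realType} (n : nat) (eta : R) : eta = betaA / Num.sqrt (n + 1)%:R ->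
  [/\ 0 < eta, eta <= betaA & (n + 1)%:R * eta ^+ 2 = betaA ^+ 2].
Proof.
move=> ->; have [beta_gt0 _] := @betaA_bounds R.
have n1_ge1 : 1 <= ((n + 1)%:R : R) by rewrite ler1n addn1.
have sqrt_ge1 : 1 <= Num.sqrt ((n + 1)%:R : R) by rewrite -[X in X <= _]sqrtr1 ler_sqrt // (le_trans ler01 n1_ge1).
have sqrt_gt0 := lt_le_trans ltr01 sqrt_ge1.
split; first by rewrite divr_gt0.
  by rewrite ler_pdivrMr // ler_peMr // ltW.
rewrite expr_div_n sqr_sqrtr ?(le_trans ler01) // mulrC divfK //.
by rewrite gt_eqF // (lt_le_trans ltr01).
Qed.

Section NewtonStep.
Context {R : realType} {nz nb : nat}.
Variables (Q : 'M[R]_nz) (c : 'cV[R]_nz) (A : 'M[R]_(nb, nz)) (b : 'cV[R]_nb).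
Hypothesis Q_psd : forall z : 'cV[R]_nz, 0 <= (z^T *m Q *m z) 0 0.
Variables (eta gamma : R).
Hypothesis eta_def : eta = betaA / Num.sqrt (nz + nb + 1)%:R.
Hypothesis gamma_def : gamma = 1 - eta.
Local Notation nn := (nz + nb)%N.
Local Notation vec := 'cV[R]_(nn + 1).
Local Notation psi := (psi Q c A b).
Local Notation jac := (jac_psi Q c A b).
Local Notation resid := (resid Q c A b).
Local Notation e_tau := (col_mx 0 1%:M : vec).
Local Notation last := (rshift nn (@ord0 0)).

Definition nbhd (x s : vec) :=
  enorm (hadam x s - mu x s *: onesv R (nn + 1)) <= betaA * mu x s.

Lemma nbhdE (x s : vec) : 0 <= mu x s ->
  nbhd x s = (\sum_i (x i 0 * s i 0 - mu x s) ^+ 2 <= betaA ^+ 2 * mu x s ^+ 2).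
Proof.
move=> mu_ge0; rewrite /nbhd enorm_le; last by rewrite mulr_ge0 // ltW // (proj1 betaA_bounds).
rewrite exprMn.
by congr (_ <= _); apply: eq_bigr => i _; rewrite !mxE mulr1.
Qed.

Lemma e_tauE i : e_tau i 0 = (i == last)%:R.
Proof.
rewrite -(splitK i); case: (split i) => j /=.
  by rewrite col_mxEu mxE eq_lrshift.
by rewrite col_mxEd ord1 eqxx scalar_mx11E.
Qed.

Lemma dotv_mu (x s : vec) : dotv x s = (nn + 1)%:R * mu x s.
Proof. by rewrite /mu mulrC divfK // pnatr_eq0 addn1. Qed.

Lemma mu_gt0 (x s : vec) : posv x -> posv s -> 0 < mu x s.
Proof.
move=> x_gt0 s_gt0; rewrite /mu divr_gt0 ?ltr0n ?addn1 //.
have xs_ge0 i : 0 <= x i 0 * s i 0 by rewrite mulr_ge0 // ltW.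
by apply: lt_le_trans (ler_sum_term last xs_ge0); rewrite mulr_gt0.
Qed.

Lemma gamma_gt0 : 0 < gamma.
Proof.
rewrite gamma_def; have [_ eta_le _] := eta_bounds eta_def.
by have := proj2 (@betaA_bounds R); lra.
Qed.

Section FromIterate.
Variables xb sb : vec.
Hypotheses (xb_gt0 : posv xb) (sb_gt0 : posv sb).
Local Notation sol := (newton_sol Q c A b eta gamma xb sb).
Local Notation dx := (usubmx sol).
Local Notation ds := (dsubmx sol).
Local Notation r := (resid xb sb).
Local Notation w := (dotv dx (jac xb *m dx)).

Let tau_neq0 : tau xb != 0.
Proof. by rewrite gt_eqF ?tau_gt0. Qed.

Let newton_blocks :
  col_mx (- (jac xb *m dx) + ds) (diagc sb *m dx + diagc xb *m ds) =
  newton_rhs Q c A b eta gamma xb sb.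
Proof.
rewrite -mul_newton_mat vsubmxK mulmxA mulmxV ?mul1mx //.
exact: newton_mat_unit.
Qed.

Lemma newton_ds : ds = jac xb *m dx - eta *: r.
Proof.
have [+ _] := eq_col_mx newton_blocks => /(congr1 (+%R^~ (jac xb *m dx))).
by rewrite addrAC addNr add0r addrC.
Qed.

Lemma newton_complementarity i :
  sb i 0 * dx i 0 + xb i 0 * ds i 0 = gamma * mu xb sb - xb i 0 * sb i 0.
Proof.
have [_ /(congr1 (fun v : vec => v i 0))] := eq_col_mx newton_blocks.
by rewrite mxE !diagc_mulE !mxE mulr1.
Qed.

(* Summing the complementarity equations: [dx . s + x . ds = - eta x . s]. *)
Lemma newton_dir_orth_resid : dotv dx r = 0.
Proof.
have sum_comp : dotv sb dx + dotv xb ds = - eta * dotv xb sb.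
  rewrite /dotv -big_split /=; under eq_bigr => i _ do rewrite newton_complementarity.
  rewrite sumrB sumr_const card_ord -mulr_natl -/(dotv xb sb) dotv_mu gamma_def; ring.
have xr : dotv xb r = dotv xb sb by rewrite dotvBr dotv_psi // subr0.
rewrite dotvBr (dotvC dx (psi xb)) -[X in - X]opprK -dotv_jac_psi //.
rewrite (_ : jac xb *m dx = ds + eta *: r); last by rewrite newton_ds subrK.
by rewrite dotvDr dotvZr xr (dotvC dx); lra.
Qed.

Lemma sum_newton_prod : \sum_i dx i 0 * ds i 0 = w.
Proof. by rewrite -/(dotv dx ds) newton_ds dotvBr dotvZr newton_dir_orth_resid mulr0 subr0. Qed.

Lemma newton_prod_ge0 : 0 <= w.
Proof. by rewrite dotv_jac_psi_quad // Mp_psd. Qed.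

Hypothesis xb_sb_nbhd : nbhd xb sb.

Lemma newton_step_bounds : posv (xb + dx) /\
  \sum_i (dx i 0 * ds i 0 - (i == last)%:R * w) ^+ 2 <= betaA ^+ 2 * (gamma * mu xb sb) ^+ 2.
Proof.
have [_ eta_le card_eta] := eta_bounds eta_def.
have [beta_gt0 beta_le] := @betaA_bounds R.
have mu_pos := mu_gt0 xb_gt0 sb_gt0.
have near : \sum_i (xb i 0 * sb i 0 - mu xb sb) ^+ 2 <= betaA ^+ 2 * mu xb sb ^+ 2.
  by rewrite -nbhdE // ltW.
have sum_xs : \sum_i xb i 0 * sb i 0 = #|'I_(nn + 1)|%:R * mu xb sb.
  by rewrite card_ord -dotv_mu.
have card : #|'I_(nn + 1)|%:R * eta ^+ 2 = betaA ^+ 2 by rewrite card_ord.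
have comp i : sb i 0 * dx i 0 + xb i 0 * ds i 0 = (1 - eta) * mu xb sb - xb i 0 * sb i 0.
  by rewrite -gamma_def newton_complementarity.
have := newton_step_gt0 xb_gt0 sb_gt0 mu_pos sum_xs near (ltW beta_gt0) beta_le eta_le card
  comp sum_newton_prod newton_prod_ge0.
have := newton_step_near xb_gt0 sb_gt0 mu_pos sum_xs near (ltW beta_gt0) beta_le eta_le card
  comp sum_newton_prod newton_prod_ge0 last.
by rewrite -gamma_def => ? pos; split=> // i; rewrite mxE pos.
Qed.

Local Notation xn := (xb + dx).
Local Notation sn := (psi (xb + dx) + gamma *: r).

Let gmu_gt0 : 0 < gamma * mu xb sb.
Proof. by rewrite mulr_gt0 ?gamma_gt0 ?mu_gt0. Qed.

Let xn_gt0 : posv xn.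
Proof. by have [] := newton_step_bounds. Qed.

(* Only the [tau] entry of [sn] deviates from the linearization [sb + ds]. *)
Lemma next_s_entries i : hadam xn sn i 0 =
  gamma * mu xb sb + (dx i 0 * ds i 0 - (i == last)%:R * w).
Proof.
have tau_xn : xb last 0 + dx last 0 = tau xb + tau dx by rewrite /tau !mxE.
have taun_neq0 : tau xb + tau dx != 0 by rewrite -tauD gt_eqF ?tau_gt0.
have sn_i : sn i 0 = sb i 0 + ds i 0 - w / (tau xb + tau dx) * (i == last)%:R.
  rewrite -e_tauE psi_shift // -dotv_jac_psi_quad // newton_ds /resid gamma_def.
  by rewrite !mxE; ring.
have expand (y : R) : (xb i 0 + dx i 0) * (sb i 0 + ds i 0 - y) = xb i 0 * sb i 0
    + (sb i 0 * dx i 0 + xb i 0 * ds i 0) + dx i 0 * ds i 0 - (xb i 0 + dx i 0) * y.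
  by ring.
rewrite hadamE sn_i [xn i 0]mxE expand newton_complementarity.
case: eqP => [-> | _]; last by rewrite !mulr0 mul0r !subr0; ring.
by rewrite tau_xn !mulr1 mul1r [_ * (w / _)]mulrC divfK //; ring.
Qed.

Lemma dotv_next : dotv xn sn = gamma * dotv xb sb.
Proof.
rewrite dotv_hadam (eq_bigr _ (fun i _ => next_s_entries i)) big_split /= sumrB.
rewrite sum_newton_prod sum_delta subrr addr0 sumr_const card_ord -mulr_natl.
by rewrite dotv_mu mulrCA.
Qed.

Lemma mu_next : mu xn sn = gamma * mu xb sb.
Proof. by rewrite /mu dotv_next mulrA. Qed.

Lemma nbhd_next : nbhd xn sn.
Proof.
have [_ near] := newton_step_bounds.
rewrite nbhdE mu_next; last exact: ltW.
apply: le_trans near; apply: ler_sum => i _.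
by rewrite -hadamE next_s_entries addrAC subrr add0r.
Qed.

Lemma next_s_gt0 : posv sn.
Proof.
have [_ near] := newton_step_bounds.
have [beta_gt0 beta_le] := @betaA_bounds R.
move=> i; rewrite -(pmulr_rgt0 _ (xn_gt0 i)) -hadamE.
have /(ge_of_sqr_dev_le (ltW beta_gt0) gmu_gt0) : (hadam xn sn i 0 - gamma * mu xb sb) ^+ 2
    <= betaA ^+ 2 * (gamma * mu xb sb) ^+ 2.
  apply: le_trans near; rewrite next_s_entries addrAC subrr add0r.
  exact: ler_sum_term i (fun j => sqr_ge0 _).
by apply: lt_le_trans; rewrite mulr_gt0 //; lra.
Qed.

Lemma stepA_invariant : let p := stepA Q c A b eta gamma (xb, sb) in
  [/\ posv p.1, posv p.2, nbhd p.1 p.2, dotv p.1 p.2 = gamma * dotv xb sb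
     & resid p.1 p.2 = gamma *: resid xb sb].
Proof.
split; [exact: xn_gt0 | exact: next_s_gt0 | exact: nbhd_next | exact: dotv_next |].
by rewrite /= /resid addrAC subrr add0r.
Qed.

End FromIterate.
End NewtonStep.

Section Iterates.
Context {R : realType} {nz nb : nat}.
Variables (Q : 'M[R]_nz) (c : 'cV[R]_nz) (A : 'M[R]_(nb, nz)) (b : 'cV[R]_nb).
Hypothesis Q_psd : forall z : 'cV[R]_nz, 0 <= (z^T *m Q *m z) 0 0.
Local Notation nn := (nz + nb)%N.
Local Notation e := (onesv R (nn + 1)).
Local Notation psi := (psi Q c A b).
Local Notation r0 := (resid Q c A b e e).

Lemma onesv_gt0 m : posv (onesv R m).
Proof. by move=> i; rewrite mxE ltr01. Qed.

Lemma tau_onesv : tau e = 1.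
Proof. by rewrite /tau !mxE. Qed.

Lemma xpart_onesv : xpart e = onesv R nn.
Proof. by apply/matrixP => i j; rewrite !mxE. Qed.

(* This is what the scaling [sigma] of step (1) is designed for. *)
Lemma resid0_ge0 i : 0 <= r0 i 0.
Proof.
have sigma_gt0 := sigma_gt0 Q c A b.
have -> : r0 i 0 = 1 - psi e i 0 by rewrite /resid !mxE.
rewrite -(splitK i); case: (split i) => j /=.
  have -> : psi e (lshift 1 j) 0 = xpart (psi e) j 0.
    by rewrite -{1}[psi e]vsubmxK col_mxEu.
  rewrite xpart_psi xpart_onesv tau_onesv scale1r /Mp /qp -scalemxAl -scalerDr mxE.
  set t := (Mmat Q A *m onesv R nn + qvec c b) j 0.
  have t_le : t <= sigma Q c A b.
    rewrite /sigma !le_max; apply/orP; left; apply/orP; right.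
    exact: (le_bigmax 0 (fun i => (Mmat Q A *m onesv R nn + qvec c b) i 0) j).
  by rewrite subr_ge0 mulrC ler_pdivrMr // mul1r.
have -> : psi e (rshift nn j) 0 = tau (psi e).
  by rewrite -{1}[psi e]vsubmxK col_mxEd ord1.
rewrite tau_psi xpart_onesv tau_onesv divr1 /Mp /qp -scalemxAl !dotvZr.
set a := dotv _ (Mmat Q A *m _); set q := dotv _ (qvec c b); set s := sigma Q c A b.
have le_sigma : - a - q <= s by rewrite /s /sigma le_max lexx orbT.
have -> : 1 - (- (s^-1 * a) - s^-1 * q) = s^-1 * (s + a + q) by field; rewrite gt_eqF.
by apply: mulr_ge0; [rewrite invr_ge0 ltW | lra].
Qed.

(* The entries of [r0] are nonnegative and sum to [e . r0 = e . e = n + 1]. *)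
Lemma enorm_resid0_le : enorm r0 <= (nn + 1)%:R.
Proof.
rewrite enorm_le ?ler0n //; apply: le_trans (sum_sqr_le_sqr_sum resid0_ge0) _.
have -> : \sum_i r0 i 0 = dotv e r0 by apply: eq_bigr => i _; rewrite [e i 0]mxE mul1r.
by rewrite /resid dotvBr dotv_psi ?tau_onesv ?oner_neq0 // subr0 dotv_onesv.
Qed.

Variables (eta gamma : R).
Hypothesis eta_def : eta = betaA / Num.sqrt (nn + 1)%:R.
Hypothesis gamma_def : gamma = 1 - eta.

Lemma mu_onesv : mu e e = 1.
Proof. by rewrite /mu dotv_onesv divff // pnatr_eq0 addn1. Qed.

Lemma iterA_invariant k :
  [/\ posv (xk Q c A b eta gamma k), posv (sk Q c A b eta gamma k),
      nbhd (xk Q c A b eta gamma k) (sk Q c A b eta gamma k),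
      rk Q c A b eta gamma k = gamma ^+ k *: rk Q c A b eta gamma 0
    & dotv (xk Q c A b eta gamma k) (sk Q c A b eta gamma k) = gamma ^+ k * (nn + 1)%:R].
Proof.
elim: k => [|k [x_gt0 s_gt0 near rk_eq dot_eq]].
  rewrite /xk /sk /iterA /= expr0 scale1r mul1r dotv_onesv.
  split=> //; try exact: onesv_gt0.
  rewrite nbhdE mu_onesv ?ler01 //.
  under eq_bigr => i _ do rewrite !mxE mulr1 subrr expr0n.
  by rewrite big1 // mulr_ge0 ?sqr_ge0.
have iterS : iterA Q c A b eta gamma k.+1 =
    stepA Q c A b eta gamma (xk Q c A b eta gamma k, sk Q c A b eta gamma k).
  by rewrite /xk /sk /iterA iterS -surjective_pairing.
have [] := stepA_invariant c A b Q_psd eta_def gamma_def x_gt0 s_gt0 near.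
rewrite /rk /xk /sk iterS -/(xk _ _ _ _ _ _ k) -/(sk _ _ _ _ _ _ k) => ?????.
split=> //; first by rewrite exprS -scalerA -rk_eq.
by rewrite exprS -mulrA -dot_eq.
Qed.

End Iterates.

Lemma Niter_contracts {R : realType} (n : nat) (eps : R) : 0 < eps -> eps <= (n + 1)%:R ->
  (1 - betaA / Num.sqrt (n + 1)%:R) ^+ Niter n eps * (n + 1)%:R <= eps.
Proof.
move=> eps_gt0 eps_le.
have [eta_gt0 eta_le _] := eta_bounds (erefl (betaA / Num.sqrt (n + 1)%:R : R)).
have [_ beta_le] := @betaA_bounds R.
set eta := betaA / _ in eta_gt0 eta_le *; set g := 1 - eta.
have n1_gt0 : 0 < ((n + 1)%:R : R) by rewrite ltr0n addn1.
have g_gt0 : 0 < g by rewrite /g; lra.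
have ln_g : ln g < 0 by apply: ln_lt0; rewrite g_gt0 /g; lra.
set L := ln ((n + 1)%:R / eps).
have L_ge0 : 0 <= L by apply: ln_ge0; rewrite ler_pdivlMr // mul1r.
have ratio_ge0 : 0 <= L / - ln g by rewrite divr_ge0 // oppr_ge0 ltW.
have N_ge : L / - ln g <= (Niter n eps)%:R.
  by rewrite /Niter -/eta -/g -/L natr_absz ger0_norm ?ceil_ge // ceil_ge0; lra.
rewrite -ler_pdivlMr // -ler_ln ?posrE ?exprn_gt0 ?divr_gt0 //.
rewrite lnXn // ln_div ?posrE // -[ln g *+ _]mulr_natl.
have : L <= (Niter n eps)%:R * - ln g by rewrite -ler_pdivrMr // oppr_gt0.
rewrite /L ln_div ?posrE //; lra.
Qed.

Theorem theorem1 (R : realType) (nz nb : nat)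
  (Q : 'M[R]_nz) (c : 'cV[R]_nz) (A : 'M[R]_(nb, nz)) (b : 'cV[R]_nb)
  (eps : R) :
  (1 <= nz + nb)%N ->
  Q^T = Q ->
  (forall z : 'cV[R]_nz, 0 <= (z^T *m Q *m z) 0 0) ->
  0 < eps -> eps <= (nz + nb + 1)%:R ->
  let n := (nz + nb)%N in
  let eta : R := betaA / Num.sqrt (n + 1)%:R in
  let gamma : R := 1 - eta in
  let N := Niter n eps in
  (forall k, (k <= N)%N ->
     ((k < N)%N ->
        newton_mat Q c A b (xk Q c A b eta gamma k) (sk Q c A b eta gamma k)
          \in unitmx)
     /\ posv (xk Q c A b eta gamma k)
     /\ posv (sk Q c A b eta gamma k)
     /\ enorm (hadam (xk Q c A b eta gamma k) (sk Q c A b eta gamma k)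
               - muk Q c A b eta gamma k *: onesv R (n + 1))
          <= betaA * muk Q c A b eta gamma k
     /\ rk Q c A b eta gamma k = (1 - eta) ^+ k *: rk Q c A b eta gamma 0
     /\ dotv (xk Q c A b eta gamma k) (sk Q c A b eta gamma k)
          = (1 - eta) ^+ k * (n + 1)%:R)
  /\ enorm (rk Q c A b eta gamma N) <= eps
  /\ dotv (xk Q c A b eta gamma N) (sk Q c A b eta gamma N) <= eps.
Proof.
move=> _ _ Q_psd eps_gt0 eps_le n eta gamma N.
have eta_def : eta = betaA / Num.sqrt (n + 1)%:R by [].
have gamma_def : gamma = 1 - eta by [].
have invariant := iterA_invariant c A b Q_psd eta_def gamma_def.
split.
  move=> k _; have [x_gt0 s_gt0 near rk_eq dot_eq] := invariant k.
  by do !split=> //; move=> _; apply: newton_mat_unit.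
have [_ _ _ rk_eq dot_eq] := invariant N.
have contracted : gamma ^+ N * (n + 1)%:R <= eps := Niter_contracts eps_gt0 eps_le.
split; last by rewrite dot_eq.
have gamma_N_ge0 : 0 <= gamma ^+ N by rewrite exprn_ge0 // ltW // (gamma_gt0 eta_def).
rewrite rk_eq enormZ //; apply: le_trans contracted.
by rewrite ler_wpM2l // enorm_resid0_le.
Qed.
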